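(* Let $Y$ be a real Banach space and $\varepsilon>0$. Define $f:B_Y\times B_Y\times B_{Y^*}\to\mathbb{R}$ by $$f(x,y,x^* )=\sup_{t\ge\varepsilon}\Big(1-\frac{\|x+ty\|}{|x^*(x)|+t}\Big).$$ If $\delta>0$, $x,\tilde x,y,\tilde y\in B_Y$ with $\|x-\tilde x\|\le\delta$, $\|y-\tilde y\|\le\delta$, and $x^*,\tilde x^*\in B_{Y^*}$ with $\|x^*-\tilde x^*\|\le\delta$, then $$|f(x,y,x^* )-f(\tilde x,\tilde y,\tilde x^* )|\le\delta\,(3/\varepsilon+2/\varepsilon^2+1).$$
   Context: $B_Y$ and $B_{Y^*}$ denote the closed unit balls of $Y$ and of its dual $Y^*$. *)

From HB Require Import structures.
From mathcomp Require Import all_boot all_order all_algebra.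
From mathcomp Require Import all_classical all_reals all_analysis.
Set Implicit Arguments. Unset Strict Implicit. Unset Printing Implicit Defensive.
Import Order.TTheory GRing.Theory Num.Theory.
Import numFieldNormedType.Exports.
Local Open Scope classical_set_scope.
Local Open Scope ring_scope.

Definition in_unit_ball (R : realType) (Y : normedModType R) (x : Y) : Prop :=
  `|x| <= 1.

(* ||phi|| <= c for a linear functional phi (operator norm), written out:
   |phi y| <= c ||y|| for all y. *)
Definition dual_norm_le (R : realType) (Y : normedModType R)
  (phi : Y -> R) (c : R) : Prop := forall y : Y, `|phi y| <= c * `|y|.

Definition in_dual_ball (R : realType) (Y : normedModType R)
  (xs : {scalar Y}) : Prop := continuous xs /\ dual_norm_le xs 1.

Definition fval (R : realType) (Y : normedModType R) (eps : R)
  (x y : Y) (xs : {scalar Y}) : R :=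
  sup [set (1 - `|x + t *: y| / (`|xs x| + t)) | t in [set t : R | eps <= t]].

From HB Require Import structures.
From mathcomp Require Import all_boot all_order all_algebra.
From mathcomp Require Import all_classical all_reals all_analysis.
From mathcomp Require Import ring lra.
Set Implicit Arguments. Unset Strict Implicit. Unset Printing Implicit Defensive.
Import Order.TTheory GRing.Theory Num.Theory.
Import numFieldNormedType.Exports.
Local Open Scope classical_set_scope.
Local Open Scope ring_scope.

(* Taking suprema is 1-Lipschitz for the uniform distance, so it suffices to
   compare the two expressions under the sup at each fixed [t >= eps].  There
   the numerator [|x + t y|] moves by at most [delta (1 + t)] and the
   denominator [|x^*(x)| + t] by at most [2 delta]; as both denominators are
   [>= t], the quotient moves by at most [delta (1 + 3/t + 2/t^2)], which is
   largest at [t = eps]. *)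

Lemma le_sup_addr (R : realType) (T : Type) (P : set T) (g h : T -> R) (C : R) :
  P !=set0 -> has_ubound (h @` P) ->
  (forall t, P t -> g t <= h t + C) -> sup (g @` P) <= sup (h @` P) + C.
Proof.
move=> [t0 Pt0] ubh gle; apply: ge_sup; first by exists (g t0), t0.
move=> _ [t Pt <-]; apply: (le_trans (gle t Pt)).
by rewrite lerD2r; apply: (ub_le_sup ubh); exists t.
Qed.

Lemma ler_dist_sup (R : realType) (T : Type) (P : set T) (g h : T -> R) (C : R) :
  P !=set0 -> has_ubound (g @` P) -> has_ubound (h @` P) ->
  (forall t, P t -> `|g t - h t| <= C) -> `|sup (g @` P) - sup (h @` P)| <= C.
Proof.
move=> P0 ubg ubh gh; rewrite ler_distl lerBlDr.
apply/andP; split; apply: le_sup_addr => // t Pt; have := gh t Pt;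
  rewrite ler_distl => /andP[]; lra.
Qed.

Lemma ler_dist_divr (R : realFieldType) (N M A B : R) :
  0 < A -> 0 < B -> 0 <= M ->
  `|N / A - M / B| <= `|N - M| / A + M * `|A - B| / (A * B).
Proof.
move=> A_gt0 B_gt0 M_ge0.
have -> : N / A - M / B = (N - M) / A + M * (B - A) / (A * B).
  by field; rewrite !gt_eqF.
apply: (le_trans (ler_normD _ _)).
by rewrite !(normrM, normfV) (ger0_norm M_ge0) (gtr0_norm A_gt0) (gtr0_norm B_gt0)
  (distrC B).
Qed.

Lemma ler_dist_shifted_ratio (R : realFieldType) (eps delta t a b N M : R) :
  0 < eps -> 0 <= delta -> eps <= t -> 0 <= a -> 0 <= b ->
  `|a - b| <= 2 * delta -> `|N - M| <= delta * (1 + t) -> 0 <= M <= 1 + t ->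
  `|N / (a + t) - M / (b + t)| <= delta * (3 / eps + 2 / eps ^+ 2 + 1).
Proof.
move=> eps_gt0 delta_ge0 eps_le_t a_ge0 b_ge0 dab dNM /andP[M_ge0 M_le].
have t_gt0 : 0 < t := lt_le_trans eps_gt0 eps_le_t.
have at_gt0 : 0 < a + t by lra.
have bt_gt0 : 0 < b + t by lra.
apply: (le_trans (ler_dist_divr N at_gt0 bt_gt0 M_ge0)).
have first_le : `|N - M| / (a + t) <= delta * (1 + t) / t.
  apply: (le_trans (ler_wpM2r _ dNM)); first by rewrite invr_ge0 ltW.
  by rewrite ler_wpM2l ?mulr_ge0 ?lef_pV2 ?posrE //; lra.
have second_le : M * `|a + t - (b + t)| / ((a + t) * (b + t))
    <= (1 + t) * (2 * delta) / (t * t).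
  have -> : a + t - (b + t) = a - b by ring.
  apply: ler_pM.
  - by rewrite mulr_ge0.
  - by rewrite invr_ge0 ltW ?mulr_gt0.
  - exact: ler_pM.
  - by rewrite lef_pV2 ?posrE ?mulr_gt0 //; apply: ler_pM; lra.
apply: (le_trans (lerD first_le second_le)).
have -> : delta * (1 + t) / t + (1 + t) * (2 * delta) / (t * t)
    = delta * (3 / t + 2 / t ^+ 2 + 1).
  by field; rewrite gt_eqF.
rewrite ler_wpM2l // !lerD2r lerD ?ler_wpM2l ?lef_pV2 ?posrE ?exprn_gt0 //.
by rewrite !expr2 ler_pM ?(ltW eps_gt0).
Qed.

Lemma ler_dist_add_scale (R : numFieldType) (V : normedModType R) (t : R)
    (x xt y yt : V) :
  `|(x + t *: y) - (xt + t *: yt)| <= `|x - xt| + `|t| * `|y - yt|.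
Proof. by rewrite opprD addrACA -scalerBr -normrZ ler_normD. Qed.

Lemma ler_dist_scalar_apply (R : realType) (Y : normedModType R)
    (xs xst : {scalar Y}) (delta : R) (x xt : Y) :
  dual_norm_le xs 1 -> dual_norm_le (fun z => xs z - xst z) delta ->
  `|xs x - xst xt| <= `|x - xt| + delta * `|xt|.
Proof.
move=> xs1 dxs.
have -> : xs x - xst xt = xs (x - xt) + (xs xt - xst xt).
  by rewrite raddfB addrA subrK.
apply: (le_trans (ler_normD _ _)); apply: lerD; last exact: dxs.
by rewrite -[`|x - xt|]mul1r; apply: xs1.
Qed.

Definition fval_term (R : realType) (Y : normedModType R) (x y : Y)
    (xs : {scalar Y}) (t : R) : R :=
  1 - `|x + t *: y| / (`|xs x| + t).

Lemma fvalE (R : realType) (Y : normedModType R) (eps : R) (x y : Y)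
    (xs : {scalar Y}) :
  fval eps x y xs = sup (fval_term x y xs @` [set t | eps <= t]).
Proof. by []. Qed.

Lemma has_ubound_fval_term (R : realType) (Y : normedModType R) (eps : R)
    (x y : Y) (xs : {scalar Y}) :
  0 <= eps -> has_ubound (fval_term x y xs @` [set t | eps <= t]).
Proof.
move=> eps_ge0; exists 1 => _ [t /= eps_le_t <-].
by rewrite lerBlDr lerDl divr_ge0 // addr_ge0 // (le_trans eps_ge0).
Qed.

Lemma ler_dist_fval_term (R : realType) (Y : normedModType R)
    (eps delta t : R) (x xt y yt : Y) (xs xst : {scalar Y}) :
  0 < eps -> 0 <= delta -> eps <= t ->
  in_unit_ball xt -> in_unit_ball yt -> dual_norm_le xs 1 ->
  `|x - xt| <= delta -> `|y - yt| <= delta ->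
  dual_norm_le (fun z => xs z - xst z) delta ->
  `|fval_term x y xs t - fval_term xt yt xst t|
    <= delta * (3 / eps + 2 / eps ^+ 2 + 1).
Proof.
move=> eps_gt0 delta_ge0 eps_le_t xt1 yt1 xs1 dx dy dxs.
have t_gt0 : 0 < t := lt_le_trans eps_gt0 eps_le_t.
rewrite /fval_term opprB addrC addrA subrK distrC.
apply: ler_dist_shifted_ratio => //.
- apply: (le_trans (ler_dist_dist _ _)).
  apply: (le_trans (ler_dist_scalar_apply x xt xs1 dxs)).
  by rewrite mulr_natl mulr2n lerD // ler_piMr.
- apply: (le_trans (ler_dist_dist _ _)).
  apply: (le_trans (ler_dist_add_scale _ _ _ _ _)).
  by rewrite gtr0_norm // mulrDr mulr1 lerD // [delta * t]mulrC ler_pM2l.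
- rewrite normr_ge0 /=; apply: (le_trans (ler_normD _ _)).
  by rewrite normrZ gtr0_norm // lerD // ler_piMr // ltW.
Qed.

Theorem lemma2p1 (R : realType) (Y : completeNormedModType R) (eps delta : R)
  (x xt y yt : Y) (xs xst : {scalar Y}) :
  0 < eps -> 0 < delta ->
  in_unit_ball x -> in_unit_ball xt -> in_unit_ball y -> in_unit_ball yt ->
  in_dual_ball xs -> in_dual_ball xst ->
  `|x - xt| <= delta -> `|y - yt| <= delta ->
  dual_norm_le (fun z => xs z - xst z) delta ->
  `|fval eps x y xs - fval eps xt yt xst|
    <= delta * (3 / eps + 2 / eps ^+ 2 + 1).
Proof.
move=> eps_gt0 delta_gt0 _ xt1 _ yt1 [_ xs1] _ dx dy dxs.
have eps_ge0 := ltW eps_gt0.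
rewrite !fvalE; apply: ler_dist_sup.
- by exists eps => /=.
- exact: has_ubound_fval_term.
- exact: has_ubound_fval_term.
- by move=> t eps_le_t; apply: ler_dist_fval_term => //; exact: ltW.
Qed.
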